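(* For every $n \geq 3$, the set $\mathcal{T}^{(3)}_n \subseteq \mathcal{T}_n$ (defined in the context) satisfies $|\mathcal{T}^{(3)}_n| = F_{2n-5}$ and \[\chi(\mathrm{KG}(\mathcal{T}^{(3)}_n)) = n-2,\] where $F_k$ is the $k$th Fibonacci number with $F_1 = F_2 = 1$.
   Context: Label the vertices of a convex $n$-gon by $1,\dots,n$ in cyclic order; $\mathrm{Diag}_n = \{\{i,j\} \subseteq [n]: i-j\not\equiv \pm1 \pmod n\}$; a triangulation is identified with its set of diagonals, and $\mathcal{T}_n$ is the set of triangulations. For a set system $\mathcal{F}$, $\mathrm{KG}(\mathcal{F})$ is the graph on $\mathcal{F}$ with $F,F'$ adjacent iff $F\cap F'=\emptyset$. A parenthesization of an ordered list of symbols $\sigma_1,\dots,\sigma_m$ is a way to insert parentheses into $\sigma_1\sigma_2\cdots\sigma_m$ so that it is read as $m-1$ applications of a binary product. $k$-parenthesizations are defined recursively: a $0$-parenthesization is a single symbol. For odd $k\geq 1$, a $k$-parenthesization is one of the form $\pi_1(\pi_2(\cdots(\pi_{\ell-1}(\pi_\ell\sigma))\cdots))$ with $\ell \geq 0$, $\sigma$ a single symbol and $\pi_1,\dots,\pi_\ell$ $(k-1)$-parenthesizations (of consecutive blocks of symbols). For even $k \geq 2$, a $k$-parenthesization is one of the form $(\cdots((\sigma\pi_1)\pi_2)\cdots\pi_{\ell-1})\pi_\ell$ with $\ell\ge 0$, $\sigma$ a single symbol and $\pi_i$ $(k-1)$-parenthesizations. Triangulations $T\in\mathcal{T}_n$ are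 in bijection with parenthesizations of $\sigma_1,\dots,\sigma_{n-1}$: $T$ corresponds to the unique parenthesization in which, for every triangle $\{i,j,k\}$ of $T$ with $i<j<k$ (triangles may use sides of the polygon), the product $\sigma_i\cdots\sigma_{k-1}$ is formed by multiplying $\sigma_i\cdots\sigma_{j-1}$ and $\sigma_j\cdots\sigma_{k-1}$. $\mathcal{T}^{(k)}_n$ is the set of triangulations corresponding to $k$-parenthesizations under this bijection. *)

From mathcomp Require Import all_boot.
From mathcomp Require Import boolp.

Set Implicit Arguments.
Unset Strict Implicit.
Unset Printing Implicit Defensive.

(* Polygon, diagonals.  Vertices of the convex n-gon are labelled       *)
(* 1..n; we use the type 'I_n.+1 and only the labels 1..n (label 0 is    *)

Definition Diag (n : nat) : {set {set 'I_n.+1}} :=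
  [set D : {set 'I_n.+1} | [exists i : 'I_n.+1, exists j : 'I_n.+1,
     [&& D == [set i; j], 0 < nat_of_ord i, 0 < nat_of_ord j,
         nat_of_ord i != nat_of_ord j,
         (nat_of_ord i).+1 != nat_of_ord j %[mod n] &
         (nat_of_ord j).+1 != nat_of_ord i %[mod n]]]].

(* Parenthesizations = full binary trees; leaves are the symbols        *)
(* sigma_1, ..., sigma_m read from left to right; Node l r = product.   *)
Inductive ptree : Type := Leaf | Node of ptree & ptree.

Fixpoint nleaves (t : ptree) : nat :=
  match t with Leaf => 1 | Node l r => nleaves l + nleaves r end.

(* right comb  pi_1 (pi_2 ( ... (pi_l sigma) ...))  with all pi_i in P *)
Fixpoint rcomb (P : ptree -> bool) (t : ptree) : bool :=
  match t with Leaf => true | Node l r => P l && rcomb P r end.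

(* left comb  ( ... ((sigma pi_1) pi_2) ... ) pi_l  with all pi_i in P *)
Fixpoint lcomb (P : ptree -> bool) (t : ptree) : bool :=
  match t with Leaf => true | Node l r => lcomb P l && P r end.

Fixpoint kpar (k : nat) (t : ptree) : bool :=
  match k with
  | 0 => if t is Leaf then true else false
  | k'.+1 => if odd k then rcomb (kpar k') t else lcomb (kpar k') t
  end.

(* the intervals (i, k) such that the product sigma_i ... sigma_(k-1)    *)
(* is formed in the parenthesization t whose first symbol is sigma_a     *)
Fixpoint spans (t : ptree) (a : nat) : seq (nat * nat) :=
  match t with
  | Leaf => [:: (a, a.+1)]
  | Node l r => (a, a + nleaves l + nleaves r)
                  :: spans l a ++ spans r (a + nleaves l)
  end.

(* The triangulation (as a set of diagonals) corresponding to a          *)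
(* parenthesization t of sigma_1 ... sigma_(n-1): every product          *)
(* (sigma_i..sigma_(j-1))(sigma_j..sigma_(k-1)) gives the triangle       *)
(* {i,j,k}; its diagonals are exactly the pairs {i,k} of formed products *)
(* which are diagonals of the n-gon.                                      *)
Definition triang_of (n : nat) (t : ptree) : {set {set 'I_n.+1}} :=
  [set D in Diag n |
     has (fun p : nat * nat => D == [set inord p.1; inord p.2]) (spans t 1)].

Definition Tk (k n : nat) : {set {set {set 'I_n.+1}}} :=
  [set T | `[< exists t : ptree,
                 [/\ kpar k t, nleaves t = n.-1 & T = triang_of n t] >]].

(* adjacency of KG(F): F, F' adjacent iff F ∩ F' = ∅ (F ≠ F' imposed   *)
(* by the colouring condition below, KG being a simple graph).          *)
Definition KG_adj (D : finType) : rel {set D} :=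
  fun F F' => [disjoint F & F'].

Definition colorable (T : finType) (V : {set T}) (adj : rel T) (k : nat) : bool :=
  [exists c : {ffun T -> 'I_k},
     [forall x in V, forall y in V, ((x != y) && adj x y) ==> (c x != c y)]].

Lemma colorable_exists (T : finType) (V : {set T}) (adj : rel T) :
  exists k, colorable V adj k.
Proof.
exists #|T|; apply/existsP; exists [ffun x => enum_rank x].
apply/forallP => x; apply/implyP => _; apply/forallP => y; apply/implyP => _.
apply/implyP => /andP [nxy _]; rewrite !ffunE.
by apply: contra nxy => /eqP /enum_rank_inj ->.
Qed.

Definition chromatic_number (T : finType) (V : {set T}) (adj : rel T) : nat :=
  ex_minn (colorable_exists V adj).

Fixpoint fib (k : nat) : nat :=
  match k with
  | 0 => 0
  | 1 => 1
  | (k'.+1 as k1).+1 => fib k1 + fib k'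
  end.

From HB Require Import structures.
From mathcomp Require Import all_boot boolp zify.

(* A parenthesization [t] of [n - 1] symbols determines its triangulation through [spans t 1],
   the intervals [(i, k)] of the products it forms: these are exactly the edges [{i, k}] of the
   triangulation, so [triang_of n] is injective and [T^(3)_n] is counted by 3-parenthesizations.
   Splitting a 3-parenthesization as [pi_1 (rest)] with [pi_1] a 2-parenthesization gives
   [b m = sum_s a s * b (m - s)], where [a s = 2 ^ (s - 2)] counts 2-parenthesizations; hence
   [b (m + 1) + b (m - 1) = 3 b m] and [b (n - 1) = F_(2n-5)].
   Colouring a triangulation by the apex of its triangle on the side [{1, n}] is proper and uses
   [n - 2] colours.  Conversely, [split_last], [append_last] and a fan triangulation embed a
   Mycielski-type graph over [KG(T^(3)_n)] into [KG(T^(3)_(n+1))], so every new vertex of the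
   polygon forces a new colour. *)

Set Implicit Arguments.
Unset Strict Implicit.
Unset Printing Implicit Defensive.

Definition ptree_eq_dec : comparable ptree.
Proof. by move=> x y; rewrite /decidable; decide equality. Defined.

HB.instance Definition _ := hasDecEq.Build ptree (compareP ptree_eq_dec).

Lemma nleaves_gt0 t : 0 < nleaves t.
Proof. by elim: t => //= l IHl r IHr; rewrite addn_gt0 IHl. Qed.

Lemma nleaves_le1 t : nleaves t <= 1 -> t = Leaf.
Proof. by case: t => //= l r; have := nleaves_gt0 l; have := nleaves_gt0 r; lia. Qed.

Lemma nleaves_eq2 t : nleaves t = 2 -> t = Node Leaf Leaf.
Proof.
case: t => //= l r; have := nleaves_gt0 l; have := nleaves_gt0 r => r_gt0 l_gt0 lr2.
have l_le1 : nleaves l <= 1 by lia.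
have r_le1 : nleaves r <= 1 by lia.
by rewrite (nleaves_le1 l_le1) (nleaves_le1 r_le1).
Qed.

Lemma mem_spans_Leaf a p : (p \in spans Leaf a) = (p == (a, a.+1)).
Proof. by rewrite inE. Qed.

Lemma mem_spans_Node l r a p :
  (p \in spans (Node l r) a) =
  [|| p == (a, a + nleaves l + nleaves r), p \in spans l a | p \in spans r (a + nleaves l)].
Proof. by rewrite /= inE mem_cat. Qed.

Lemma spans_bound t a x y :
  (x, y) \in spans t a -> [/\ a <= x, x < y & y <= a + nleaves t].
Proof.
elim: t a => [|l IHl r IHr] a; first by rewrite mem_spans_Leaf /= => /eqP [-> ->]; split; lia.
have := nleaves_gt0 l; have := nleaves_gt0 r.
rewrite mem_spans_Node /= => r_gt0 l_gt0 /or3P [/eqP [-> ->]|/IHl [] |/IHr []]; split; lia.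
Qed.

Lemma root_in_spans t a : (a, a + nleaves t) \in spans t a.
Proof. by case: t => [|l r]; rewrite ?mem_spans_Node ?mem_spans_Leaf /= ?addnA ?addn1 eqxx. Qed.

Lemma leaf_in_spans t a x : a <= x < a + nleaves t -> (x, x.+1) \in spans t a.
Proof.
elim: t a => [|l IHl r IHr] a /= x_in.
  by rewrite mem_spans_Leaf; apply/eqP; congr pair; lia.
rewrite mem_spans_Node; have [x_l|x_r] := ltnP x (a + nleaves l).
  by rewrite IHl ?orbT //; lia.
by rewrite IHr ?orbT //; lia.
Qed.

Lemma spans_Node_left l r a x y :
  (x, y) \in spans (Node l r) a -> y <= a + nleaves l -> (x, y) \in spans l a.
Proof.
have := nleaves_gt0 r; rewrite mem_spans_Node => r_gt0.
by case/or3P => [/eqP [_ ->] | // | /spans_bound [] *]; lia.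
Qed.

Lemma spans_Node_right l r a x y :
  (x, y) \in spans (Node l r) a -> a + nleaves l <= x -> (x, y) \in spans r (a + nleaves l).
Proof.
have := nleaves_gt0 l; rewrite mem_spans_Node => l_gt0.
by case/or3P => [/eqP [-> _] | /spans_bound [] * | //]; lia.
Qed.

Lemma spans_eq_nleaves t t' a : spans t a =i spans t' a -> nleaves t = nleaves t'.
Proof.
move=> E; have := root_in_spans t a; rewrite E => /spans_bound [_ _ le1].
have := root_in_spans t' a; rewrite -E => /spans_bound [_ _ le2]; lia.
Qed.

Lemma spans_Node_start l r a y :
  (a, y) \in spans (Node l r) a -> y < a + nleaves l + nleaves r -> y <= a + nleaves l.
Proof.
have := nleaves_gt0 l; rewrite mem_spans_Node => l_gt0.
by case/or3P => [/eqP [->] | /spans_bound [] | /spans_bound []] *; lia.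
Qed.

Lemma spans_eq_Node_left l r l' r' a :
  spans (Node l r) a =i spans (Node l' r') a -> nleaves l = nleaves l' ->
  {subset spans l a <= spans l' a}.
Proof.
move=> E El [x y] xy; have [_ _ y_le] := spans_bound xy; apply: (spans_Node_left (r := r')).
  by rewrite -E mem_spans_Node xy orbT.
by rewrite -El.
Qed.

Lemma spans_eq_Node_right l r l' r' a :
  spans (Node l r) a =i spans (Node l' r') a -> nleaves l = nleaves l' ->
  {subset spans r (a + nleaves l) <= spans r' (a + nleaves l')}.
Proof.
move=> E El [x y] xy; have [x_ge _ _] := spans_bound xy; apply: (spans_Node_right (l := l')).
  by rewrite -E mem_spans_Node xy !orbT.
by rewrite -El.
Qed.

Lemma spans_eq_Node_le l r l' r' a :
  spans (Node l r) a =i spans (Node l' r') a -> nleaves l <= nleaves l'.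
Proof.
move=> E; have := spans_eq_nleaves E; have := nleaves_gt0 r => /= r_gt0 lr_eq.
rewrite -(leq_add2l a); apply: (spans_Node_start (r := r')); last by lia.
by rewrite -E mem_spans_Node root_in_spans orbT.
Qed.

Lemma spans_inj t t' a : spans t a =i spans t' a -> t = t'.
Proof.
elim: t t' a => [|l IHl r IHr] [|l' r'] a E //; have := spans_eq_nleaves E => /=.
- by have := nleaves_gt0 l'; have := nleaves_gt0 r'; lia.
- by have := nleaves_gt0 l; have := nleaves_gt0 r; lia.
move=> _; have E' : spans (Node l' r') a =i spans (Node l r) a by move=> p; rewrite E.
have El : nleaves l = nleaves l'.
  by apply/eqP; rewrite eqn_leq (spans_eq_Node_le E) (spans_eq_Node_le E').
congr Node.
  apply: (IHl _ a) => p; apply/idP/idP; first exact: spans_eq_Node_left E El p.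
  exact: spans_eq_Node_left E' (esym El) p.
apply: (IHr _ (a + nleaves l)) => p; apply/idP/idP.
  by rewrite {2}El; exact: spans_eq_Node_right E El p.
by rewrite {1}El; exact: spans_eq_Node_right E' (esym El) p.
Qed.

Lemma modn_leq_cases n x : x <= n -> (x = n /\ x %% n = 0) \/ (x < n /\ x %% n = x).
Proof. by rewrite leq_eqVlt => /orP [/eqP ->|lt]; [left|right]; rewrite ?modnn ?modn_small. Qed.

Lemma eqn_modS_cycle n x y : 0 < x <= n -> 0 < y <= n ->
  (x.+1 == y %[mod n]) = (x.+1 == y) || (x == n) && (y == 1).
Proof.
move=> /andP [x_gt0 x_le] /andP [y_gt0 y_le].
have [xS_le | ->] : x.+1 <= n \/ x = n by lia.
  case: (modn_leq_cases y_le) => [[? ->]|[? ->]];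
  by case: (modn_leq_cases xS_le) => [[? ->]|[? ->]]; lia.
rewrite -addn1 modnDl; have n_gt0 := leq_trans x_gt0 x_le.
case: (modn_leq_cases y_le) => [[? ->]|[? ->]];
by case: (modn_leq_cases n_gt0) => [[? ->]|[? ->]]; lia.
Qed.

Definition chord n (p : nat * nat) : {set 'I_n.+1} := [set inord p.1; inord p.2].

Lemma mem_chord n a b (i : 'I_n.+1) : a <= n -> b <= n ->
  (i \in chord n (a, b)) = (nat_of_ord i == a) || (nat_of_ord i == b).
Proof. by move=> a_le b_le; rewrite !inE -!val_eqE /= !inordK. Qed.

Lemma chord_inj n a b c d : a < b <= n -> c < d <= n ->
  chord n (a, b) = chord n (c, d) -> (a, b) = (c, d).
Proof.
move=> ab cd /setP E.
have := E (inord a); have := E (inord b); have := E (inord c); have := E (inord d).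
rewrite !mem_chord ?inordK ?eqxx ?orbT ?orTb; try lia.
by move=> *; congr pair; lia.
Qed.

Lemma mem_Diag_chord n a b : 0 < a -> a < b <= n ->
  (chord n (a, b) \in Diag n) = (a.+1 < b) && ((a, b) != (1, n)).
Proof.
move=> a_gt0 ab; rewrite inE xpair_eqE; apply/existsP/idP => [[i /existsP [j]]|far].
  case/and5P => /eqP E i_gt0 j_gt0 ij /andP [ij_far ji_far].
  have := ltn_ord i; have := ltn_ord j; rewrite !ltnS => j_le i_le.
  have : i \in chord n (a, b) by rewrite E !inE eqxx.
  have : j \in chord n (a, b) by rewrite E !inE eqxx orbT.
  move: ij_far ji_far.
  by rewrite !mem_chord ?eqn_modS_cycle ?i_gt0 ?j_gt0 //=; lia.
exists (inord a); apply/existsP; exists (inord b).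
by rewrite eqxx /= !inordK ?eqn_modS_cycle; lia.
Qed.

(* The spans of [t] are the edges [{x, y}] of its triangulation; the diagonals among them are
   those that are neither a side [{x, x + 1}] nor the side [{1, n}] spanned by the root. *)
Definition pdiag t (p : nat * nat) : bool :=
  [&& p \in spans t 1, p.1.+1 < p.2 & p != (1, 1 + nleaves t)].

Lemma pdiagE t x y : pdiag t (x, y) =
  [&& (x, y) \in spans t 1, x.+1 < y & (x != 1) || (y != 1 + nleaves t)].
Proof. by rewrite /pdiag xpair_eqE negb_and. Qed.

Lemma pdiag_bound t x y : pdiag t (x, y) -> [/\ 0 < x, x.+1 < y & y <= 1 + nleaves t].
Proof. by rewrite pdiagE => /and3P [/spans_bound [] *]; split; lia. Qed.

Lemma triang_ofP n t D : nleaves t = n.-1 ->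
  reflect (exists2 p, pdiag t p & D = chord n p) (D \in triang_of n t).
Proof.
move=> nt; rewrite inE; apply: (iffP andP) => [[D_diag /hasP [[x y] xy /eqP DE]]|].
  have [x_gt0 x_lt y_le] := spans_bound xy.
  rewrite DE mem_Diag_chord ?xpair_eqE in D_diag; try lia.
  by exists (x, y) => //; rewrite pdiagE xy nt; lia.
move=> [[x y] pxy ->]; have [x_gt0 xy y_le] := pdiag_bound pxy.
move: pxy; rewrite pdiagE => /and3P [xy_in _ not_root].
rewrite mem_Diag_chord ?xpair_eqE; try lia.
by split; [lia | apply/hasP; exists (x, y)].
Qed.

Definition pdiag_disjoint t t' := forall p, pdiag t p -> ~~ pdiag t' p.

Lemma pdiag_disjoint_common t t' p : pdiag_disjoint t t' -> pdiag t p -> pdiag t' p -> False.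
Proof. by move=> disj /disj/negP. Qed.

Lemma disjoint_triang_ofP n t t' : nleaves t = n.-1 -> nleaves t' = n.-1 ->
  reflect (pdiag_disjoint t t') [disjoint triang_of n t & triang_of n t'].
Proof.
move=> nt nt'; rewrite disjoint_subset; apply: (iffP subsetP) => [sub p tp | disj D].
  have /sub : chord n p \in triang_of n t by apply/triang_ofP => //; exists p.
  by rewrite inE; apply: contra => t'p; apply/triang_ofP => //; exists p.
case/triang_ofP => // -[x y] pxy ->; rewrite inE; apply/triang_ofP => // -[[x' y'] pxy' E].
have [? ? ?] := pdiag_bound pxy; have [? ? ?] := pdiag_bound pxy'.
have xy_eq : (x, y) = (x', y') by apply: chord_inj E; lia.
by move: pxy'; rewrite -xy_eq (negbTE (disj _ pxy)).
Qed.

Lemma triang_of_sub_spans n t t' : nleaves t = n.-1 -> nleaves t' = n.-1 ->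
  triang_of n t = triang_of n t' -> {subset spans t 1 <= spans t' 1}.
Proof.
move=> nt nt' E [x y] xy; have [x_ge xy_lt y_le] := spans_bound xy.
have [-> | not_side] := eqVneq y x.+1; first by apply: leaf_in_spans; lia.
have [[-> ->] | not_root] := eqVneq (x, y) (1, n).
  by have := root_in_spans t' 1; rewrite nt'; have -> : 1 + n.-1 = n by lia.
have pxy : pdiag t (x, y) by rewrite pdiagE xy nt; move: not_root; rewrite xpair_eqE; lia.
have /triang_ofP [// | [x' y'] pxy' E'] : chord n (x, y) \in triang_of n t'.
  by rewrite -E; apply/triang_ofP => //; exists (x, y).
have [? ? ?] := pdiag_bound pxy'.
have [-> ->] : (x, y) = (x', y') by apply: chord_inj E'; lia.
by case/and3P: pxy'.
Qed.

Lemma triang_of_inj n t t' : nleaves t = n.-1 -> nleaves t' = n.-1 ->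
  triang_of n t = triang_of n t' -> t = t'.
Proof.
move=> nt nt' E; apply: (@spans_inj _ _ 1) => p; apply/idP/idP.
  exact: triang_of_sub_spans nt nt' E p.
exact: triang_of_sub_spans nt' nt (esym E) p.
Qed.

Lemma Tk_triang_of k n t : kpar k t -> nleaves t = n.-1 -> triang_of n t \in Tk k n.
Proof. by move=> kt nt; rewrite inE; apply/asboolP; exists t. Qed.

Definition tree_of k n (T : {set {set 'I_n.+1}}) : ptree :=
  if pselect (exists t, [/\ kpar k t, nleaves t = n.-1 & T = triang_of n t]) is left ex
  then proj1_sig (cid ex) else Leaf.

Lemma tree_ofP k n T : T \in Tk k n ->
  [/\ kpar k (tree_of k T), nleaves (tree_of k T) = n.-1 & T = triang_of n (tree_of k T)].
Proof. by rewrite inE /tree_of => /asboolP ex; case: pselect => // ex'; case: (cid ex'). Qed.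

Definition root_split t := if t is Node l _ then nleaves l else 0.

Lemma uniq_flatten_key (S T : eqType) (key : T -> S) (F : S -> seq T) (s : seq S) :
  uniq s -> {in s, forall x, uniq (F x)} -> {in s, forall x y, y \in F x -> key y = x} ->
  uniq (flatten [seq F x | x <- s]).
Proof.
elim: s => //= x s IHs /andP [x_s s_uniq] F_uniq F_key.
have sub_s : {subset s <= x :: s} by move=> x'; rewrite inE orbC => ->.
rewrite cat_uniq F_uniq ?mem_head // IHs //; last 2 first.
- by move=> x' /sub_s; apply: F_uniq.
- by move=> x' /sub_s; apply: F_key.
rewrite andbT; apply/hasP => -[y /flatten_mapP [x' x'_s y_x'] y_x].
have := F_key x' (sub_s _ x'_s) y y_x'; rewrite (F_key x (mem_head _ _) y y_x) => xx'.
by rewrite xx' x'_s in x_s.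
Qed.

(* All trees with [m] leaves, as soon as the recursion depth [f] is at least [m]. *)
Fixpoint trees_fuel (f m : nat) : seq ptree :=
  if f is f'.+1 then
    (if m == 1 then [:: Leaf] else [::]) ++
    flatten [seq [seq Node l r | l <- trees_fuel f' s, r <- trees_fuel f' (m - s)]
            | s <- iota 1 m.-1]
  else [::].

Definition trees m := trees_fuel m m.

Lemma mem_trees_fuel f m t : m <= f -> (t \in trees_fuel f m) = (nleaves t == m).
Proof.
elim: f m t => [|f IHf] m t m_le /=.
  by rewrite in_nil; have := nleaves_gt0 t; lia.
rewrite mem_cat; case: t => [|l r] /=.
  rewrite orbC; case: flatten_mapP => [[s _ /allpairsP [[? ?] [_ _ //]]]|_].
  by rewrite eq_sym; case: eqP.
have -> : (Node l r \in if m == 1 then [:: Leaf] else [::]) = false by case: (m == 1).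
apply/flatten_mapP/eqP => [[s]|lr_m].
  rewrite mem_iota => s_in /allpairsP [[l' r'] [/= l_in r_in [-> ->]]].
  by move: l_in r_in; rewrite !IHf; lia.
have := nleaves_gt0 l; have := nleaves_gt0 r => r_gt0 l_gt0.
exists (nleaves l); first by rewrite mem_iota; lia.
by apply/allpairsP; exists (l, r); split => //=; rewrite IHf; lia.
Qed.

Lemma trees_fuel_uniq f m : m <= f -> uniq (trees_fuel f m).
Proof.
elim: f m => [|f IHf] m m_le //=; rewrite cat_uniq; apply/and3P; split.
- by case: (m == 1).
- apply/hasP => -[t /flatten_mapP [s _ /allpairsP [[? ?] [_ _ ->]]]].
  by case: (m == 1).
apply: (@uniq_flatten_key _ _ root_split); first exact: iota_uniq.
  move=> s; rewrite mem_iota => s_in; apply: allpairs_uniq; try (apply: IHf; lia).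
  by move=> -[? ?] [? ?] _ _ [-> ->].
move=> s; rewrite mem_iota => s_in t /allpairsP [[l r] [/= l_in _ ->]].
by move: l_in; rewrite mem_trees_fuel => [/eqP|]; last lia.
Qed.

Lemma mem_trees m t : (t \in trees m) = (nleaves t == m).
Proof. exact: mem_trees_fuel. Qed.

Lemma trees_uniq m : uniq (trees m).
Proof. exact: trees_fuel_uniq. Qed.

Definition ntrees (a : pred ptree) m := count a (trees m).

Lemma count_trees_fuel (a : pred ptree) f m : m <= f -> count a (trees_fuel f m) = ntrees a m.
Proof.
move=> m_le; apply/permP; apply: uniq_perm; rewrite ?trees_fuel_uniq // => t.
by rewrite mem_trees mem_trees_fuel.
Qed.

Lemma count_Node_allpairs (a b c : pred ptree) (L R : seq ptree) :
  (forall l r, a (Node l r) = b l && c r) ->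
  count a [seq Node l r | l <- L, r <- R] = count b L * count c R.
Proof.
move=> aE; elim: L => //= l L IHL; rewrite count_cat IHL count_map mulnDl.
congr addn; rewrite (@eq_count _ _ (fun r => b l && c r)) => [|r]; last by rewrite /= aE.
by case: (b l); rewrite ?mul1n ?mul0n ?count_pred0.
Qed.

Lemma ntreesE (a b c : pred ptree) m : (forall l r, a (Node l r) = b l && c r) ->
  ntrees a m = ((m == 1) && a Leaf) + \sum_(1 <= s < m) ntrees b s * ntrees c (m - s).
Proof.
move=> aE; case: m => [|m]; first by rewrite big_geq.
have -> : ntrees a m.+1 = count a (trees_fuel m.+1 m.+1) by [].
rewrite /= count_cat; congr addn; first by case: (m.+1 == 1) => /=; rewrite ?addn0.
rewrite count_flatten -map_comp sumnE big_map [in RHS]/index_iota subn1 /=.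
apply: eq_big_seq => s; rewrite mem_iota => s_in /=.
by rewrite (count_Node_allpairs _ _ aE) !count_trees_fuel //; lia.
Qed.

Lemma ntrees_kpar0 m : ntrees (kpar 0) m = (m == 1).
Proof.
rewrite (@ntreesE _ pred0 pred0) // andbT big1 ?addn0 // => s _.
by rewrite /ntrees count_pred0.
Qed.

Lemma ntrees_kpar1 m : ntrees (kpar 1) m = (0 < m).
Proof.
elim: m => [|m IHm]; rewrite (@ntreesE _ (kpar 0) (kpar 1)) //; first by rewrite big_geq.
case: m IHm => [|m] IHm; first by rewrite big_geq.
rewrite big_ltn // ntrees_kpar0 subn1 /= IHm big_nat_cond big1 // => s /andP [/andP [s_gt1 _] _].
by rewrite ntrees_kpar0 gtn_eqF.
Qed.

Lemma ntrees_kpar2_rec m :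
  ntrees (kpar 2) m = (m == 1) + \sum_(1 <= s < m) ntrees (kpar 2) s.
Proof.
rewrite (@ntreesE _ (kpar 2) (kpar 1)) // andbT; congr addn.
by apply: eq_big_nat => s /andP [_ s_lt]; rewrite ntrees_kpar1 subn_gt0 s_lt muln1.
Qed.

Lemma ntrees_kpar2_1 : ntrees (kpar 2) 1 = 1.
Proof. by rewrite ntrees_kpar2_rec big_geq. Qed.

Lemma ntrees_kpar2 m : ntrees (kpar 2) m.+2 = 2 ^ m.
Proof.
elim: m => [|m IHm]; first by rewrite ntrees_kpar2_rec big_nat1 ntrees_kpar2_1.
have rec := ntrees_kpar2_rec m.+2; rewrite /= add0n in rec.
by rewrite ntrees_kpar2_rec big_nat_recr //= add0n -rec IHm expnS; lia.
Qed.

Lemma ntrees_kpar3_1 : ntrees (kpar 3) 1 = 1.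
Proof. by rewrite (@ntreesE _ (kpar 2) (kpar 3)) // big_geq. Qed.

Lemma ntrees_kpar3_rec m : ntrees (kpar 3) m.+2 =
  \sum_(1 <= s < m.+2) ntrees (kpar 2) s * ntrees (kpar 3) (m.+2 - s).
Proof. by rewrite (@ntreesE _ (kpar 2) (kpar 3)). Qed.

Lemma ntrees_kpar3_2 : ntrees (kpar 3) 2 = 1.
Proof. by rewrite ntrees_kpar3_rec big_nat1 ntrees_kpar2_1 ntrees_kpar3_1. Qed.

(* Peel off the first terms of the recurrence and use
   [ntrees (kpar 2) s.+1 = 2 * ntrees (kpar 2) s] for [s >= 2]. *)
Lemma ntrees_kpar3_linear_rec m :
  ntrees (kpar 3) m.+3 + ntrees (kpar 3) m.+1 = 3 * ntrees (kpar 3) m.+2.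
Proof.
set B := ntrees (kpar 3); set S := \sum_(1 <= s < m.+1) ntrees (kpar 2) s.+1 * B (m.+1 - s).
have B2 : B m.+2 = B m.+1 + S.
  by rewrite {1}/B ntrees_kpar3_rec big_nat_recl // ntrees_kpar2_1 mul1n subSS subn0.
have B3 : B m.+3 = B m.+2 + B m.+1 + S.*2.
  rewrite {1}/B ntrees_kpar3_rec big_nat_recl // big_nat_recl // ntrees_kpar2_1.
  rewrite (ntrees_kpar2 0) !mul1n !subSS !subn0 addnA -mul2n big_distrr.
  congr (_ + _); apply: eq_big_nat => -[|s] _ //=.
  by rewrite !ntrees_kpar2 expnS mulnA.
by rewrite B3 B2; lia.
Qed.

Lemma fib_add4 k : fib k.+4 + fib k = 3 * fib k.+2.
Proof. rewrite /=; lia. Qed.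

Lemma ntrees_kpar3 m : ntrees (kpar 3) m.+2 = fib m.*2.+1.
Proof.
suff : ntrees (kpar 3) m.+2 = fib m.*2.+1 /\ ntrees (kpar 3) m.+3 = fib m.*2.+3 by case.
elim: m => [|m [IH2 IH3]].
  have := ntrees_kpar3_linear_rec 0; rewrite ntrees_kpar3_1 ntrees_kpar3_2; split => //; lia.
split => //; have := ntrees_kpar3_linear_rec m.+1; have := fib_add4 m.*2.+1.
rewrite doubleS IH2 IH3; lia.
Qed.

Lemma card_Tk k n : #|Tk k n| = ntrees (kpar k) n.-1.
Proof.
rewrite /ntrees -size_filter -(size_map (triang_of n)) -(card_uniqP _); last first.
  rewrite map_inj_in_uniq ?filter_uniq ?trees_uniq // => t t'.
  by rewrite !mem_filter !mem_trees => /andP [_ /eqP nt] /andP [_ /eqP nt']; apply: triang_of_inj.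
apply: eq_card => T; apply/idP/mapP => [/tree_ofP [kt nt ->] | [t]].
  by exists (tree_of k T); rewrite // mem_filter kt mem_trees nt eqxx.
by rewrite mem_filter mem_trees => /andP [kt /eqP nt] ->; apply: Tk_triang_of.
Qed.

Lemma pdiag_Node_left l r : 1 < nleaves l -> pdiag (Node l r) (1, 1 + nleaves l).
Proof.
by move=> l_gt1; rewrite pdiagE mem_spans_Node root_in_spans orbT /=; have := nleaves_gt0 r; lia.
Qed.

Lemma pdiag_Node_right l r :
  1 < nleaves r -> pdiag (Node l r) (1 + nleaves l, 1 + nleaves l + nleaves r).
Proof.
by move=> r_gt1; rewrite pdiagE mem_spans_Node root_in_spans !orbT /=; have := nleaves_gt0 l; lia.
Qed.

Lemma exists_pdiag t : 2 < nleaves t -> exists p, pdiag t p.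
Proof.
case: t => // l r /= lr_gt2; have [l_gt1 | l_le1] := ltnP 1 (nleaves l).
  by exists (1, 1 + nleaves l); apply: pdiag_Node_left.
by exists (1 + nleaves l, 1 + nleaves l + nleaves r); apply: pdiag_Node_right; lia.
Qed.

(* Two triangulations with the same apex over the side [{1, n}] share a side of that triangle,
   and for [n > 3] one of its two other sides is a diagonal. *)
Lemma root_split_common t t' : nleaves t = nleaves t' -> root_split t = root_split t' ->
  t = t' \/ exists2 p, pdiag t p & pdiag t' p.
Proof.
case: t => [|l r]; case: t' => [|l' r'] //=; [by left | | |].
- by have := nleaves_gt0 l'; have := nleaves_gt0 r'; lia.
- by have := nleaves_gt0 l; have := nleaves_gt0 r; lia.
move=> nE lE; have rE : nleaves r = nleaves r' by lia.
have [l_gt1 | l_le1] := ltnP 1 (nleaves l).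
  by right; exists (1, 1 + nleaves l); [|rewrite lE]; apply: pdiag_Node_left; lia.
have [r_gt1 | r_le1] := ltnP 1 (nleaves r).
  right; exists (1 + nleaves l, 1 + nleaves l + nleaves r); first exact: pdiag_Node_right.
  by rewrite lE rE; apply: pdiag_Node_right; lia.
have l'_le1 : nleaves l' <= 1 by lia.
have r'_le1 : nleaves r' <= 1 by lia.
left; rewrite (nleaves_le1 l_le1) (nleaves_le1 r_le1).
by rewrite (nleaves_le1 l'_le1) (nleaves_le1 r'_le1).
Qed.

Definition edge (T : eqType) (e : rel T) : rel T := fun x y => (x != y) && e x y.

Lemma colorableP (T : finType) (V : {set T}) (e : rel T) k :
  reflect (exists c : T -> 'I_k, {in V &, forall x y, edge e x y -> c x != c y})
    (colorable V e k).
Proof.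
apply: (iffP existsP) => [[c c_ok] | [c c_ok]].
  exists c => x y xV yV.
  by move/forall_inP/(_ x xV)/forall_inP/(_ y yV)/implyP: c_ok.
exists [ffun x => c x]; apply/forall_inP => x xV; apply/forall_inP => y yV.
by apply/implyP; rewrite !ffunE; apply: c_ok.
Qed.

Lemma colorable0F (T : finType) (V : {set T}) (e : rel T) (x : T) : ~~ colorable V e 0.
Proof. by apply/negP => /existsP [c _]; case: (c x). Qed.

Lemma edge_KG (D : finType) (A B : {set D}) x :
  x \in A -> [disjoint A & B] -> edge (@KG_adj D) A B.
Proof.
move=> xA AB; rewrite /edge /KG_adj AB andbT; apply/eqP => eqAB.
by move: AB; rewrite -eqAB => /disjointFr/(_ xA); rewrite xA.
Qed.

(* A Mycielski-type step: [f] embeds the first graph, [w x] shadows [f x], and [z] sees every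
   shadow.  Recolouring [x] by the colour of [w x] whenever [f x] has the colour of [z] gives a
   colouring of the first graph avoiding that colour. *)
Lemma colorable_mycielski (T1 T2 : finType) (V1 : {set T1}) (V2 : {set T2})
    (e1 : rel T1) (e2 : rel T2) (f w : T1 -> T2) (z : T2) (x0 : T1) k :
  symmetric e1 ->
  {homo f : x / x \in V1 >-> x \in V2} -> {homo w : x / x \in V1 >-> x \in V2} ->
  z \in V2 -> x0 \in V1 ->
  {in V1, forall x, edge e2 (w x) z} ->
  {in V1 &, forall x y, edge e1 x y -> edge e2 (f x) (f y)} ->
  {in V1 &, forall x y, edge e1 x y -> edge e2 (w x) (f y)} ->
  colorable V2 e2 k.+1 -> colorable V1 e1 k.
Proof.
move=> e1_sym fV wV zV x0V w_z f_hom w_f /colorableP [c c_ok].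
pose g x := if c (f x) == c z then c (w x) else c (f x).
have g_z : {in V1, forall x, c z != g x}.
  move=> x xV; rewrite eq_sym /g; case: ifP => [_ | /negbT //].
  exact: c_ok (wV _ xV) zV (w_z x xV).
have g_ok : {in V1 &, forall x y, edge e1 x y -> g x != g y}.
  move=> x y xV yV exy; have eyx : edge e1 y x by rewrite /edge eq_sym e1_sym.
  rewrite /g; case: ifP => [/eqP fx_z | _]; case: ifP => [/eqP fy_z | _].
  - by have := c_ok _ _ (fV _ xV) (fV _ yV) (f_hom x y xV yV exy); rewrite fx_z fy_z eqxx.
  - exact: c_ok (wV _ xV) (fV _ yV) (w_f x y xV yV exy).
  - by rewrite eq_sym; exact: c_ok (wV _ yV) (fV _ xV) (w_f y x yV xV eyx).
  - exact: c_ok (fV _ xV) (fV _ yV) (f_hom x y xV yV exy).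
have k_gt0 : 0 < k.
  case: (posnP k) => // k0; have := g_z x0 x0V; rewrite -val_eqE /=.
  by have := ltn_ord (g x0); have := ltn_ord (c z); lia.
apply/colorableP; exists (fun x => odflt (Ordinal k_gt0) (unlift (c z) (g x))).
move=> x y xV yV /(g_ok x y xV yV).
have [jx -> _] := unlift_some (g_z x xV); have [jy -> _] := unlift_some (g_z y yV).
by rewrite !liftK /= (inj_eq (@lift_inj _ _)).
Qed.

Lemma colorable_Tk k n : 2 < n -> colorable (Tk k n) (@KG_adj _) (n - 2).
Proof.
case: n => [|[|[|m]]] // _; rewrite (_ : m.+3 - 2 = m.+1) //; apply/colorableP.
exists (fun T => inord (root_split (tree_of k T)).-1) => T T' TV T'V.
have [_ nt TE] := tree_ofP TV; have [_ nt' T'E] := tree_ofP T'V.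
move: (tree_of k T) (tree_of k T') nt nt' TE T'E => t t' /= nt nt' -> -> /andP [neq disj].
have rs_bound (u : ptree) : nleaves u = m.+2 -> 0 < root_split u <= m.+1.
  by case: u => //= l r; have := nleaves_gt0 l; have := nleaves_gt0 r; lia.
have := rs_bound _ nt; have := rs_bound _ nt' => bound' bound.
apply: contra neq => /eqP/(congr1 val); rewrite /= !inordK; try lia.
move=> rs_eq; have {rs_eq} : root_split t = root_split t' by lia.
case/(root_split_common (etrans nt (esym nt'))) => [-> // | [p pt pt']].
by move/disjoint_triang_ofP: disj => /(_ nt nt' p pt); rewrite pt'.
Qed.

(* Two ways of adding a symbol at the end: [split_last] replaces the last symbol by a product of
   two, [append_last] multiplies the innermost factor [pi_l sigma] of the right comb by the new
   symbol.  [last_start t a] is the index of the first symbol of [pi_l sigma]. *)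
Fixpoint split_last t := if t is Node l r then Node l (split_last r) else Node Leaf Leaf.

Fixpoint append_last t :=
  if t is Node l r then (if r is Node _ _ then Node l (append_last r) else Node t Leaf)
  else Leaf.

Fixpoint last_start t a :=
  if t is Node l r then (if r is Node _ _ then last_start r (a + nleaves l) else a) else a.

Fixpoint rightcomb k :=
  if k is k'.+1 then (if k' is 0 then Leaf else Node Leaf (rightcomb k')) else Leaf.

Definition fan k := Node (rightcomb k) Leaf.

Lemma append_last_Node l r : 1 < nleaves r -> append_last (Node l r) = Node l (append_last r).
Proof. by case: r. Qed.

Lemma last_start_Node l r a :
  1 < nleaves r -> last_start (Node l r) a = last_start r (a + nleaves l).
Proof. by case: r. Qed.

Lemma nleaves_split_last t : nleaves (split_last t) = (nleaves t).+1.
Proof. by elim: t => //= l _ r ->; rewrite addnS. Qed.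

Lemma nleaves_append_last t : 1 < nleaves t -> nleaves (append_last t) = (nleaves t).+1.
Proof.
elim: t => // l _ r IHr t_gt1; have [r_gt1 | /nleaves_le1 ->] := ltnP 1 (nleaves r).
  by rewrite append_last_Node //= IHr // addnS.
by rewrite /= addn1.
Qed.

Lemma nleaves_rightcomb k : 0 < k -> nleaves (rightcomb k) = k.
Proof. by elim: k => [|[|k] IHk] _ //=; rewrite IHk. Qed.

Lemma kpar3_split_last t : kpar 3 t -> kpar 3 (split_last t).
Proof. by elim: t => //= l _ r IHr /andP [-> /IHr]. Qed.

Lemma kpar3_append_last t : kpar 3 t -> kpar 3 (append_last t).
Proof.
elim: t => // l _ r IHr; have [r_gt1 | /nleaves_le1 ->] := ltnP 1 (nleaves r).
  by rewrite append_last_Node //= => /andP [-> /IHr].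
by rewrite /= !andbT.
Qed.

Lemma kpar1_rightcomb k : kpar 1 (rightcomb k).
Proof. by elim: k => [|[|k] IHk]. Qed.

Lemma kpar3_fan k : kpar 3 (fan k).
Proof. by rewrite /= andbT; case: k => [|[|k]] //; exact: (kpar1_rightcomb k.+1). Qed.

Lemma spans_split_last t a x y : (x, y) \in spans (split_last t) a ->
  [\/ (x, y) \in spans t a /\ y < a + nleaves t,
      y = (a + nleaves t).+1 /\ (x, a + nleaves t) \in spans t a
    | y = x.+1].
Proof.
elim: t a => [|l _ r IHr] a.
  rewrite mem_spans_Node !mem_spans_Leaf /= => /or3P [] /eqP [-> ->].
  - by apply: Or32; rewrite !addn1.
  - by apply: Or33; rewrite ?addn1.
  - by apply: Or33.
change (split_last (Node l r)) with (Node l (split_last r)).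
change (nleaves (Node l r)) with (nleaves l + nleaves r).
rewrite mem_spans_Node nleaves_split_last => /or3P [/eqP [-> ->] | xy | /IHr []].
- by apply: Or32; split; [lia | rewrite mem_spans_Node addnA eqxx].
- apply: Or31; rewrite mem_spans_Node xy orbT; split=> //.
  by have [_ _ ?] := spans_bound xy; have := nleaves_gt0 r; lia.
- by case=> xy ?; apply: Or31; rewrite mem_spans_Node xy !orbT; split=> //; lia.
- by case=> -> xy; apply: Or32; rewrite mem_spans_Node addnA xy !orbT; split=> //; lia.
- exact: Or33.
Qed.

Lemma last_start_spans t a : 1 < nleaves t ->
  [/\ (last_start t a, a + nleaves t) \in spans t a,
      (last_start t a, (a + nleaves t).-1) \in spans t a
    & (last_start t a).+1 < a + nleaves t].
Proof.
elim: t a => // l _ r IHr a; change (nleaves (Node l r)) with (nleaves l + nleaves r).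
have := nleaves_gt0 l => l_gt0; have [r_gt1 _ | /nleaves_le1 -> _] := ltnP 1 (nleaves r).
  have [s_e s_e1 s_lt] := IHr (a + nleaves l) r_gt1.
  by rewrite last_start_Node // !mem_spans_Node addnA s_e s_e1 !orbT; split=> //; lia.
change (last_start (Node l Leaf) a) with a; change (nleaves Leaf) with 1.
rewrite !mem_spans_Node addnA addn1 succnK root_in_spans eqxx orbT.
by split=> //; lia.
Qed.

Lemma spans_append_last t a x y : 1 < nleaves t -> (x, y) \in spans (append_last t) a ->
  [\/ (x, y) \in spans t a /\ y < a + nleaves t,
      [/\ y = (a + nleaves t).+1, (x, a + nleaves t) \in spans t a & x.+1 < a + nleaves t],
      x = last_start t a /\ y = a + nleaves t
    | y = x.+1].
Proof.
elim: t a => // l _ r IHr a; change (nleaves (Node l r)) with (nleaves l + nleaves r).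
have := nleaves_gt0 l => l_gt0; have [r_gt1 _ | /nleaves_le1 -> _] := ltnP 1 (nleaves r).
  rewrite append_last_Node // last_start_Node // mem_spans_Node nleaves_append_last //.
  case/or3P => [/eqP [-> ->] | xy |
                /(IHr _ r_gt1) [[xy y_lt] | [-> xy x_lt] | [-> ->] | ->] //].
  - by apply: Or42; split; [lia | rewrite mem_spans_Node addnA eqxx | lia].
  - apply: Or41; rewrite mem_spans_Node xy orbT; split=> //.
    by have [_ _ ?] := spans_bound xy; lia.
  - by apply: Or41; rewrite mem_spans_Node xy !orbT; split=> //; lia.
  - by apply: Or42; rewrite mem_spans_Node addnA xy !orbT; split=> //; lia.
  - by apply: Or43; rewrite addnA.
  - exact: Or44.
change (append_last (Node l Leaf)) with (Node (Node l Leaf) Leaf).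
change (last_start (Node l Leaf) a) with a; change (nleaves Leaf) with 1.
rewrite mem_spans_Node => /or3P [/eqP [-> ->] | xy | ].
- by apply: Or42; split; [lia | rewrite mem_spans_Node addnA eqxx | lia].
- have [y_lt | y_ge] := ltnP y (a + (nleaves l + 1)); first exact: Or41.
  rewrite mem_spans_Node mem_spans_Leaf in xy.
  case/or3P: xy => [/eqP [-> ->] | /spans_bound [] | /eqP [-> ->]]; try lia.
  + by apply: Or43; rewrite addnA.
  + exact: Or44.
- by rewrite mem_spans_Leaf => /eqP [-> ->]; apply: Or44.
Qed.

Lemma spans_rightcomb k a x y :
  0 < k -> (x, y) \in spans (rightcomb k) a -> y = a + k \/ y = x.+1.
Proof.
elim: k a => [|[|k] IHk] a // _; first by rewrite mem_spans_Leaf => /eqP [-> ->]; right.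
change (rightcomb k.+2) with (Node Leaf (rightcomb k.+1)).
rewrite mem_spans_Node nleaves_rightcomb // mem_spans_Leaf.
case/or3P => [/eqP [_ ->] | /eqP [-> ->] | /IHk [] // ->];
  [left | right | left | right] => //=; lia.
Qed.

Lemma nleaves_fan k : 0 < k -> nleaves (fan k) = k.+1.
Proof. by move=> k_gt0; rewrite /= nleaves_rightcomb // addn1. Qed.

Lemma pdiag_fan k x y : 0 < k -> pdiag (fan k) (x, y) -> y = k.+1.
Proof.
move=> k_gt0; rewrite pdiagE nleaves_fan // mem_spans_Node nleaves_rightcomb // mem_spans_Leaf.
case/and3P => /or3P [/eqP [-> ->] | /spans_rightcomb [] // -> | /eqP [-> ->]] /=; lia.
Qed.

Lemma pdiag_disjoint_append_last t t' : 2 < nleaves t -> nleaves t = nleaves t' ->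
  pdiag_disjoint t t' -> pdiag_disjoint (append_last t) (append_last t').
Proof.
move=> t_gt2 tt' disj [x y]; have no_common := pdiag_disjoint_common disj.
have t_gt1 : 1 < nleaves t by lia.
have t'_gt1 : 1 < nleaves t' by lia.
rewrite !pdiagE !nleaves_append_last // -tt'.
case/and3P => xy_t x_lt root_t; apply/negP => /and3P [xy_t' _ _].
case: (spans_append_last t_gt1 xy_t) => [[xy_t0 y_lt] | [yE xe_t x_lt'] | [xE yE] | ?];
  case: (spans_append_last t'_gt1 xy_t') => [[xy_t0' ?] | [? xe_t' ?] | [xE' ?] | ?];
  try lia.
- by apply: (no_common (x, y)); rewrite !pdiagE -?tt' ?xy_t0 ?xy_t0'; lia.
- rewrite -tt' in xe_t'.
  by apply: (no_common (x, 1 + nleaves t)); rewrite !pdiagE -?tt' ?xe_t ?xe_t'; lia.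
have [s1 s2 s3] := last_start_spans 1 t_gt1; have [s1' s2' _] := last_start_spans 1 t'_gt1.
rewrite -xE in s1 s2 s3; rewrite -xE' -tt' in s1' s2'.
have [x1 | x_ne1] := eqVneq x 1.
  rewrite x1 in s2 s2'.
  by apply: (no_common (1, (1 + nleaves t).-1)); rewrite !pdiagE -?tt' ?s2 ?s2'; lia.
by apply: (no_common (x, 1 + nleaves t)); rewrite !pdiagE -?tt' ?s1 ?s1'; lia.
Qed.

Lemma pdiag_disjoint_split_append t t' : 1 < nleaves t -> nleaves t = nleaves t' ->
  pdiag_disjoint t t' -> pdiag_disjoint (split_last t) (append_last t').
Proof.
move=> t_gt1 tt' disj [x y]; have no_common := pdiag_disjoint_common disj.
have t'_gt1 : 1 < nleaves t' by lia.
rewrite !pdiagE nleaves_split_last nleaves_append_last // -tt'.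
case/and3P => xy_t x_lt root_t; apply/negP => /and3P [xy_t' _ _].
case: (spans_split_last xy_t) => [[xy_t0 y_lt] | [yE xe_t] | ?];
  case: (spans_append_last t'_gt1 xy_t') => [[xy_t0' ?] | [? xe_t' ?] | [? ?] | ?];
  try lia.
- by apply: (no_common (x, y)); rewrite !pdiagE -?tt' ?xy_t0 ?xy_t0'; lia.
rewrite -tt' in xe_t'.
by apply: (no_common (x, 1 + nleaves t)); rewrite !pdiagE -?tt' ?xe_t ?xe_t'; lia.
Qed.

Lemma pdiag_disjoint_split_fan t : pdiag_disjoint (split_last t) (fan (nleaves t)).
Proof.
move=> [x y]; rewrite pdiagE nleaves_split_last => /and3P [xy x_lt _].
apply/negP => /(pdiag_fan (nleaves_gt0 t)) yE.
by case: (spans_split_last xy) => [[_ ?] | [? _] | ?]; lia.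
Qed.

Lemma edge_triang_of n t t' : nleaves t = n.-1 -> nleaves t' = n.-1 -> 2 < nleaves t ->
  pdiag_disjoint t t' -> edge (@KG_adj _) (triang_of n t) (triang_of n t').
Proof.
move=> nt nt' t_gt2 /(disjoint_triang_ofP nt nt'); have [p tp] := exists_pdiag t_gt2.
by apply: (@edge_KG _ _ _ (chord n p)); apply/triang_ofP => //; exists p.
Qed.

Lemma edge_Tk k n T T' : 2 < n -> T \in Tk k n -> T' \in Tk k n -> edge (@KG_adj _) T T' ->
  [/\ nleaves (tree_of k T) = n.-1, nleaves (tree_of k T') = n.-1, 2 < nleaves (tree_of k T)
    & pdiag_disjoint (tree_of k T) (tree_of k T')].
Proof.
move=> n_gt2 /tree_ofP [_ nt TE] /tree_ofP [_ nt' T'E] /andP [neq disj].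
rewrite TE T'E in neq disj.
split; [exact: nt | exact: nt' | | exact/(disjoint_triang_ofP nt nt')].
rewrite nt ltn_neqAle; apply/andP; split; last by lia.
apply: contra neq => /eqP n3.
have /nleaves_eq2 -> : nleaves (tree_of k T) = 2 by rewrite nt.
have /nleaves_eq2 -> : nleaves (tree_of k T') = 2 by rewrite nt'.
exact: eqxx.
Qed.

Lemma colorable_Tk3_pred n k : 2 < n ->
  colorable (Tk 3 n.+1) (@KG_adj _) k.+1 -> colorable (Tk 3 n) (@KG_adj _) k.
Proof.
move=> n_gt2; apply: (@colorable_mycielski _ _ _ _ _ _
  (fun T => triang_of n.+1 (append_last (tree_of 3 T)))
  (fun T => triang_of n.+1 (split_last (tree_of 3 T)))
  (triang_of n.+1 (fan n.-1)) (triang_of n (fan n.-2))).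
- by move=> A B; rewrite /KG_adj disjoint_sym.
- move=> T /tree_ofP [kt nt _]; apply: Tk_triang_of; first exact: kpar3_append_last.
  by rewrite nleaves_append_last nt; lia.
- move=> T /tree_ofP [kt nt _]; apply: Tk_triang_of; first exact: kpar3_split_last.
  by rewrite nleaves_split_last nt; lia.
- by apply: Tk_triang_of; [exact: kpar3_fan | rewrite nleaves_fan; lia].
- by apply: Tk_triang_of; [exact: kpar3_fan | rewrite nleaves_fan; lia].
- move=> T /tree_ofP [_ nt _].
  apply: edge_triang_of; rewrite ?nleaves_split_last ?nleaves_fan ?nt; try lia.
  by rewrite -nt; apply: pdiag_disjoint_split_fan.
- move=> T T' TV T'V /(edge_Tk n_gt2 TV T'V) [nt nt' t_gt2 disj].
  apply: edge_triang_of; rewrite ?nleaves_append_last ?nt ?nt'; try lia.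
  exact: pdiag_disjoint_append_last t_gt2 (etrans nt (esym nt')) disj.
- move=> T T' TV T'V /(edge_Tk n_gt2 TV T'V) [nt nt' t_gt2 disj].
  apply: edge_triang_of; rewrite ?nleaves_append_last ?nleaves_split_last ?nt ?nt'; try lia.
  by apply: pdiag_disjoint_split_append (etrans nt (esym nt')) disj; lia.
Qed.

Lemma colorable_Tk3_lower n k : 2 < n -> colorable (Tk 3 n) (@KG_adj _) k -> n - 2 <= k.
Proof.
elim: n k => // n IHn [|k] n_gt2 col.
  by move: col; rewrite (negbTE (colorable0F _ _ set0)).
have [-> // | n_gt2'] : n = 2 \/ 2 < n by lia.
by have := IHn k n_gt2' (colorable_Tk3_pred n_gt2' col); lia.
Qed.

Theorem theorem1p2 (n : nat) :
  3 <= n ->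
  #|Tk 3 n| = fib (2 * n - 5) /\
  chromatic_number (Tk 3 n) (@KG_adj _) = n - 2.
Proof.
move=> n_ge3; split.
  rewrite card_Tk; case: n n_ge3 => [|[|[|m]]] // _.
  by rewrite ntrees_kpar3; congr fib; lia.
rewrite /chromatic_number; case: ex_minnP => k col k_min.
by apply/eqP; rewrite eqn_leq k_min ?colorable_Tk //; exact: colorable_Tk3_lower col.
Qed.
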